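(* Let $\theta$ be an angle and let $\mathcal P=(p_1,\dots,p_k)$ be a $\theta$-path from $p_1$ to $p_k$. Then $\mathcal P$ is increasing-chord, i.e., it is self-approaching both from $p_1$ to $p_k$ and from $p_k$ to $p_1$.
   Context: The slope of a segment $\overline{uv}$ is the angle of the clockwise rotation around $u$ that brings $\overline{uv}$ to coincide with the positive $x$-axis; slopes are defined modulo $360^\circ$. A segment $\overline{uv}$ (directed from $u$ to $v$) is a $\theta$-edge if its slope lies in $[\theta-45^\circ,\theta+45^\circ]$ (modulo $360^\circ$). A geometric path $(p_1,\dots,p_k)$ is a $\theta$-path from $p_1$ to $p_k$ if $\overline{p_ip_{i+1}}$ is a $\theta$-edge for every $1\le i\le k-1$. A geometric path $(v_1,\dots,v_k)$ is self-approaching from $v_1$ to $v_k$ if for every three distinct points $a,b,c$ appearing in this order along the path from $v_1$ to $v_k$ (possibly interior to edges) $|\overline{bc}|<|\overline{ac}|$, where $|\cdot|$ is Euclidean length. *)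

From Stdlib Require Import Reals List.
Open Scope R_scope.

Definition pt := (R * R)%type.

Definition dist (p q : pt) : R :=
  sqrt ((fst p - fst q) ^ 2 + (snd p - snd q) ^ 2).

(* alpha (in radians) is a slope of the segment uv: the counterclockwise
   angle of v - u from the positive x-axis (= the clockwise rotation angle
   about u bringing uv onto the positive x-axis). Defined modulo 2*PI. *)
Definition has_slope (u v : pt) (alpha : R) : Prop :=
  u <> v /\
  fst v - fst u = dist u v * cos alpha /\
  snd v - snd u = dist u v * sin alpha.

Definition theta_edge (theta : R) (u v : pt) : Prop :=
  exists alpha, has_slope u v alpha /\
    theta - PI / 4 <= alpha <= theta + PI / 4.

Definition origin : pt := (0, 0).

Definition theta_path (theta : R) (P : list pt) : Prop :=
  forall i : nat, (S i < length P)%nat ->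
    theta_edge theta (nth i P origin) (nth (S i) P origin).

(* A position along the path: edge index i (edge from p_{i+1} to p_{i+2} in
   1-based terms) and local parameter lam in [0,1]. *)
Definition valid_pos (P : list pt) (i : nat) (lam : R) : Prop :=
  (S i < length P)%nat /\ 0 <= lam <= 1.

Definition path_point (P : list pt) (i : nat) (lam : R) : pt :=
  let a := nth i P origin in
  let b := nth (S i) P origin in
  (fst a + lam * (fst b - fst a), snd a + lam * (snd b - snd a)).

Definition pos_le (i : nat) (lam : R) (j : nat) (mu : R) : Prop :=
  (i < j)%nat \/ (i = j /\ lam <= mu).

Definition self_approaching (P : list pt) : Prop :=
  forall (i1 i2 i3 : nat) (l1 l2 l3 : R),
    valid_pos P i1 l1 -> valid_pos P i2 l2 -> valid_pos P i3 l3 ->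
    pos_le i1 l1 i2 l2 -> pos_le i2 l2 i3 l3 ->
    let a := path_point P i1 l1 in
    let b := path_point P i2 l2 in
    let c := path_point P i3 l3 in
    a <> b -> b <> c -> a <> c ->
    dist b c < dist a c.

Definition increasing_chord (P : list pt) : Prop :=
  self_approaching P /\ self_approaching (rev P).

(* Every edge of a theta-path makes an angle of at most 45 degrees with the
   direction theta, so its components along the two orthogonal directions
   theta - 45 and theta + 45 degrees are nonnegative.  Both coordinates are
   therefore monotone along the path, hence for points a, b, c in this order
   the chords b - a and c - b have a nonnegative dot product, and
   |ac|^2 = |ab|^2 + |bc|^2 + 2 <b - a, c - b> > |bc|^2.  The reversed path is a
   (theta + 180)-path, which gives the other direction. *)

From Pilot Require Import Defs.
From Stdlib Require Import Reals List Lra Lia.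
Open Scope R_scope.

Definition sub (p q : pt) : pt := (fst p - fst q, snd p - snd q).

Definition dot (u v : pt) : R := fst u * fst v + snd u * snd v.

Definition comp (phi : R) (p : pt) : R := cos phi * fst p + sin phi * snd p.

Lemma comp_sub phi p q : comp phi (sub p q) = comp phi p - comp phi q.
Proof. unfold comp, sub; simpl; ring. Qed.

Lemma dot_comp_orthogonal phi u v :
  dot u v = comp phi u * comp phi v + comp (phi + PI / 2) u * comp (phi + PI / 2) v.
Proof.
  unfold dot, comp.
  rewrite cos_plus, sin_plus, cos_PI2, sin_PI2.
  pose proof (sin2_cos2 phi) as Hsc; unfold Rsqr in Hsc.
  transitivity ((sin phi * sin phi + cos phi * cos phi)
                * (fst u * fst v + snd u * snd v)); [rewrite Hsc|]; ring.
Qed.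

Lemma dist_sym p q : Defs.dist p q = Defs.dist q p.
Proof. unfold Defs.dist; f_equal; ring. Qed.

Lemma dist_dot p q : Defs.dist p q = sqrt (dot (sub p q) (sub p q)).
Proof. unfold Defs.dist, dot, sub; simpl; f_equal; ring. Qed.

Lemma dot_self_pos p q : p <> q -> 0 < dot (sub p q) (sub p q).
Proof.
  intros Hne; unfold dot, sub; simpl.
  destruct (Rle_lt_dec (Rsqr (fst p - fst q) + Rsqr (snd p - snd q)) 0) as [Hle|];
    [|unfold Rsqr in *; lra].
  exfalso; apply Hne.
  destruct (Rplus_sqr_eq_0 (fst p - fst q) (snd p - snd q)) as [Hx Hy].
  - pose proof (Rle_0_sqr (fst p - fst q)); pose proof (Rle_0_sqr (snd p - snd q)); lra.
  - destruct p, q; simpl in *; f_equal; lra.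
Qed.

Lemma dist_lt_of_dot_nonneg a b c :
  0 <= dot (sub b a) (sub c b) -> a <> b -> Defs.dist b c < Defs.dist a c.
Proof.
  intros Hdot Hab.
  rewrite !(dist_sym _ c), !dist_dot.
  pose proof (dot_self_pos b a (not_eq_sym Hab)) as Hba.
  assert (Hcb : 0 <= dot (sub c b) (sub c b))
    by (unfold dot; pose proof (Rle_0_sqr (fst (sub c b)));
        pose proof (Rle_0_sqr (snd (sub c b))); unfold Rsqr in *; lra).
  assert (Hca : dot (sub c a) (sub c a)
                = dot (sub c b) (sub c b) + dot (sub b a) (sub b a)
                  + 2 * dot (sub b a) (sub c b))
    by (unfold dot, sub; simpl; ring).
  apply sqrt_lt_1_alt; lra.
Qed.

Lemma has_slope_comp u v alpha phi :
  has_slope u v alpha -> comp phi v - comp phi u = Defs.dist u v * cos (alpha - phi).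
Proof.
  intros [_ [Hx Hy]].
  rewrite <- comp_sub, cos_minus; unfold comp, sub; simpl.
  rewrite Hx, Hy; ring.
Qed.

Lemma has_slope_comp_le u v alpha phi :
  has_slope u v alpha -> phi - PI / 2 <= alpha <= phi + PI / 2 ->
  comp phi u <= comp phi v.
Proof.
  intros Hs Hal.
  pose proof (has_slope_comp u v alpha phi Hs) as Hc.
  assert (Hd : 0 <= Defs.dist u v) by apply sqrt_pos.
  assert (Hcos : 0 <= cos (alpha - phi)) by (apply cos_ge_0; lra).
  pose proof (Rmult_le_pos _ _ Hd Hcos); lra.
Qed.

Lemma has_slope_rev u v alpha : has_slope u v alpha -> has_slope v u (alpha + PI).
Proof.
  intros [Hne [Hx Hy]]; repeat split.
  - exact (not_eq_sym Hne).
  - rewrite neg_cos, (dist_sym v u); lra.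
  - rewrite neg_sin, (dist_sym v u); lra.
Qed.

Lemma theta_path_rev theta P : theta_path theta P -> theta_path (theta + PI) (rev P).
Proof.
  intros HP i Hi; rewrite length_rev in Hi.
  rewrite !rev_nth by lia.
  replace (length P - S i)%nat with (S (length P - S (S i))) by lia.
  destruct (HP (length P - S (S i))%nat ltac:(lia)) as [alpha [Hs Hal]].
  exists (alpha + PI); split; [apply has_slope_rev; exact Hs | lra].
Qed.

Lemma le_nth_of_le_succ (f : pt -> R) (P : list pt) :
  (forall i, (S i < length P)%nat -> f (nth i P origin) <= f (nth (S i) P origin)) ->
  forall i j, (i <= j < length P)%nat -> f (nth i P origin) <= f (nth j P origin).
Proof.
  intros Hstep i j; induction j as [|j IHj]; intros Hij.
  - replace i with 0%nat by lia; lra.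
  - destruct (Nat.eq_dec i (S j)) as [->|]; [lra|].
    apply Rle_trans with (f (nth j P origin)); [apply IHj | apply Hstep]; lia.
Qed.

Lemma comp_path_point phi P i lam :
  comp phi (path_point P i lam) =
  comp phi (nth i P origin)
  + lam * (comp phi (nth (S i) P origin) - comp phi (nth i P origin)).
Proof. unfold comp, path_point; simpl; ring. Qed.

Lemma comp_path_point_le phi P :
  (forall i, (S i < length P)%nat ->
     comp phi (nth i P origin) <= comp phi (nth (S i) P origin)) ->
  forall i l j m, valid_pos P i l -> valid_pos P j m -> pos_le i l j m ->
  comp phi (path_point P i l) <= comp phi (path_point P j m).
Proof.
  intros Hstep i l j m [Hi Hl] [Hj Hm] Hle.
  rewrite !comp_path_point.
  pose proof (Hstep i Hi); pose proof (Hstep j Hj).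
  destruct Hle as [Hij | [-> Hlm]]; [|nra].
  assert (comp phi (nth (S i) P origin) <= comp phi (nth j P origin))
    by (apply (le_nth_of_le_succ (comp phi)); [exact Hstep | lia]).
  nra.
Qed.

Lemma theta_path_comp_le theta P phi :
  theta_path theta P -> phi = theta - PI / 4 \/ phi = theta - PI / 4 + PI / 2 ->
  forall i l j m, valid_pos P i l -> valid_pos P j m -> pos_le i l j m ->
  comp phi (path_point P i l) <= comp phi (path_point P j m).
Proof.
  intros HP Hphi; apply comp_path_point_le; intros i Hi.
  destruct (HP i Hi) as [alpha [Hs Hal]].
  apply (has_slope_comp_le _ _ alpha); [exact Hs | destruct Hphi; subst; lra].
Qed.

Lemma theta_path_dot_nonneg theta P i1 l1 i2 l2 i3 l3 :
  theta_path theta P ->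
  valid_pos P i1 l1 -> valid_pos P i2 l2 -> valid_pos P i3 l3 ->
  pos_le i1 l1 i2 l2 -> pos_le i2 l2 i3 l3 ->
  let a := path_point P i1 l1 in
  let b := path_point P i2 l2 in
  let c := path_point P i3 l3 in
  0 <= dot (sub b a) (sub c b).
Proof.
  intros HP V1 V2 V3 L12 L23 a b c.
  rewrite (dot_comp_orthogonal (theta - PI / 4)), !comp_sub.
  assert (Hmono : forall phi,
            phi = theta - PI / 4 \/ phi = theta - PI / 4 + PI / 2 ->
            comp phi a <= comp phi b /\ comp phi b <= comp phi c)
    by (intros phi Hphi; split; eapply theta_path_comp_le; eauto).
  destruct (Hmono (theta - PI / 4)) as [A1 A2]; [now left|].
  destruct (Hmono (theta - PI / 4 + PI / 2)) as [B1 B2]; [now right|].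
  apply Rplus_le_le_0_compat; apply Rmult_le_pos; lra.
Qed.

Lemma theta_path_self_approaching theta P :
  theta_path theta P -> self_approaching P.
Proof.
  intros HP i1 i2 i3 l1 l2 l3 V1 V2 V3 L12 L23 a b c Hab _ _.
  apply dist_lt_of_dot_nonneg; [|exact Hab].
  exact (theta_path_dot_nonneg theta P i1 l1 i2 l2 i3 l3 HP V1 V2 V3 L12 L23).
Qed.

Theorem lemma3 (theta : R) (P : list pt) :
  theta_path theta P -> increasing_chord P.
Proof.
  intros HP; split.
  - exact (theta_path_self_approaching theta P HP).
  - exact (theta_path_self_approaching (theta + PI) (rev P) (theta_path_rev theta P HP)).
Qed.
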